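(* There is $d_0$ such that for all $d\ge d_0$, $A_{d,2d}\big(t\mapsto\psi_{3d}(\sqrt d\,t)\big)\ge\frac{1}{5e\pi}$.
   Context: $\mu_d$ is the probability measure on $[-1,1]$ with density $\frac{\Gamma(d/2)}{\sqrt\pi\,\Gamma((d-1)/2)}(1-t^2)^{(d-3)/2}$. $A_{d,n}(g)=\min_p\|g-p\|_{L^2(\mu_d)}$ over polynomials $p$ of degree less than $n$. The sawtooth $\psi_n:\mathbb{R}\to[-1,1]$ is $\psi_n(t)=-2n[t+1]_++2n[t-1]_++4n\sum_{j=1}^n\big((-1)^{j+n+1}[t-\tfrac{2j-1}{2n}]_++(-1)^{j+n}[t+\tfrac{2j-1}{2n}]_+\big)$ ($n$ cycles in $[-1,1]$, zero outside). *)

From Stdlib Require Import Reals.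
From Coquelicot Require Import Coquelicot.
Open Scope R_scope.

Definition Gamma (s : R) : R :=
  RInt_gen (fun x => Rpower x (s - 1) * exp (- x)) (at_point 0) (Rbar_locally p_infty).

Definition mu_density (d : nat) (t : R) : R :=
  Gamma (INR d / 2) / (sqrt PI * Gamma ((INR d - 1) / 2))
  * Rpower (1 - t ^ 2) ((INR d - 3) / 2).

Definition L2norm (d : nat) (f : R -> R) : R :=
  sqrt (RInt (fun t => (f t) ^ 2 * mu_density d t) (-1) 1).

Fixpoint peval (c : nat -> R) (n : nat) (t : R) : R :=
  match n with
  | O => 0
  | S m => peval c m t + c m * t ^ m
  end.

(* A_{d,n}(g) = min over polynomials p of degree < n of ||g - p||_{L^2(mu_d)}
   (taken as the infimum; the minimum is attained). *)
Definition A (d n : nat) (g : R -> R) : Rbar :=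
  Glb_Rbar (fun r => exists c : nat -> R, r = L2norm d (fun t => g t - peval c n t)).

Definition relu (x : R) : R := Rmax 0 x.

Fixpoint sum1 (f : nat -> R) (n : nat) : R :=
  match n with
  | O => 0
  | S m => sum1 f m + f (S m)
  end.

Definition psi (n : nat) (t : R) : R :=
  - 2 * INR n * relu (t + 1) + 2 * INR n * relu (t - 1)
  + 4 * INR n * sum1 (fun j =>
        (-1) ^ (j + n + 1) * relu (t - (2 * INR j - 1) / (2 * INR n))
      + (-1) ^ (j + n) * relu (t + (2 * INR j - 1) / (2 * INR n))) n.

From Stdlib Require Import Reals Lra Lia List Sorted Classical ClassicalDescription.
From Coquelicot Require Import Coquelicot.
Open Scope R_scope.

(* On [[0, 1 / sqrt d]] the function [t |-> psi_(3d) (sqrt d t)] runs through [3d] cells; on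
   the middle half of cell [j] it has the sign [(-1)^(j + 3d)] and modulus at least [1/2].  Call
   a cell bad if the polynomial [p] (of degree [< 2d]) has the opposite sign, or vanishes, on
   that whole middle half.  Consecutive good cells either force a sign change of [p], hence a
   root, or enclose a bad cell; since [p] has fewer than [2d] roots (Rolle), at least [d / 2]
   cells are bad, and on each of them [(psi - p)^2 >= 1/4].  On [[0, 1 / sqrt d]] the density
   of [mu_d] is at least [sqrt d / (2 e sqrt pi)]: the factor [(1 - t^2)^((d-3)/2)] is at least
   [1/e], and [Gamma (d/2) / Gamma ((d-1)/2) >= sqrt d / 2] by a Gautschi-type inequality,
   obtained from the log-convexity of [Gamma] (Cauchy-Schwarz) and [s Gamma s <= Gamma (s+1)].
   Summing over the bad cells bounds the squared error below by
   [1 / (96 e sqrt pi) >= (1 / (5 e pi))^2]. *)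

Lemma sum1_ext f g n :
  (forall j, (1 <= j <= n)%nat -> f j = g j) -> sum1 f n = sum1 g n.
Proof.
  induction n as [|n IH]; intros Hfg; simpl; [lra|].
  rewrite IH, Hfg; [lra | lia | intros; apply Hfg; lia].
Qed.

Lemma sum1_plus f g n : sum1 (fun j => f j + g j) n = sum1 f n + sum1 g n.
Proof. induction n as [|n IH]; simpl; [lra | rewrite IH; lra]. Qed.

Lemma sum1_scal a f n : sum1 (fun j => a * f j) n = a * sum1 f n.
Proof. induction n as [|n IH]; simpl; [lra | rewrite IH; lra]. Qed.

Lemma sum1_trunc f m n :
  (m <= n)%nat -> sum1 (fun j => if (j <=? m)%nat then f j else 0) n = sum1 f m.
Proof.
  induction n as [|n IH]; intros Hmn.
  - replace m with 0%nat by lia; reflexivity.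
  - destruct (Nat.eq_dec m (S n)) as [->|Hne].
    + apply sum1_ext; intros j Hj.
      destruct (Nat.leb_spec j (S n)); [reflexivity | lia].
    + cbn [sum1]; rewrite IH by lia.
      destruct (Nat.leb_spec (S n) m); [lia | lra].
Qed.

Lemma sum1_alt k : sum1 (fun j => (-1) ^ j) k = ((-1) ^ k - 1) / 2.
Proof. induction k as [|k IH]; simpl; [lra | rewrite IH; lra]. Qed.

Lemma sum1_alt_odd k : sum1 (fun j => (-1) ^ j * (2 * INR j - 1)) k = (-1) ^ k * INR k.
Proof. induction k as [|k IH]; cbn [sum1]; [simpl; lra | rewrite IH, S_INR; simpl; ring]. Qed.

Lemma pow_m1_sqr n : (-1) ^ n * (-1) ^ n = 1.
Proof.
  rewrite <- pow_add; replace (n + n)%nat with (2 * n)%nat by lia.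
  apply pow_1_even.
Qed.

Lemma relu_nonneg x : 0 <= x -> relu x = x.
Proof. intros; unfold relu; rewrite Rmax_right; lra. Qed.

Lemma relu_nonpos x : x <= 0 -> relu x = 0.
Proof. intros; unfold relu; rewrite Rmax_left; lra. Qed.

Lemma relu_kink_on_piece n m j y :
  (1 <= n)%nat -> (2 * INR m - 1) / 2 <= INR n * y <= (2 * INR m + 1) / 2 ->
  relu (y - (2 * INR j - 1) / (2 * INR n))
  = if (j <=? m)%nat then y - (2 * INR j - 1) / (2 * INR n) else 0.
Proof.
  intros Hn Hy.
  assert (HN : 0 < / INR n) by (apply Rinv_0_lt_compat, (lt_INR 0); lia).
  replace (y - (2 * INR j - 1) / (2 * INR n)) with ((INR n * y - (2 * INR j - 1) / 2) * / INR n)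
    by (field; apply not_0_INR; lia).
  destruct (Nat.leb_spec j m) as [Hjm|Hjm].
  - apply le_INR in Hjm; apply relu_nonneg, Rmult_le_pos; lra.
  - apply le_INR in Hjm; rewrite S_INR in Hjm; apply relu_nonpos; nra.
Qed.

Lemma psi_linear_piece n m y :
  (1 <= n)%nat -> (m <= n)%nat -> 0 <= y <= 1 ->
  (2 * INR m - 1) / 2 <= INR n * y <= (2 * INR m + 1) / 2 ->
  psi n y = (-1) ^ (m + n) * (2 * (INR m - INR n * y)).
Proof.
  intros Hn Hm Hy Hmy.
  assert (HN : 1 <= INR n) by (apply (le_INR 1); lia).
  unfold psi.
  rewrite (relu_nonneg (y + 1)), (relu_nonpos (y - 1)) by lra.
  set (kink := fun j => (2 * INR j - 1) / (2 * INR n)); set (u := (-1) ^ n).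
  rewrite (sum1_ext _ (fun j => u * ((-1) ^ j * (y + kink j))
      + (if (j <=? m)%nat then - u * ((-1) ^ j * (y - kink j)) else 0)) n).
  2:{ intros j Hj.
      assert (Hj1 : 1 <= INR j) by (apply (le_INR 1); lia).
      assert (Hkink : 0 <= kink j) by (apply Rdiv_le_0_compat; lra).
      unfold kink in *.
      rewrite (relu_kink_on_piece n m j y), (relu_nonneg (y + _)) by (assumption || lra).
      replace ((-1) ^ (j + n + 1)) with (- u * (-1) ^ j)
        by (unfold u; rewrite !pow_add; simpl; ring).
      replace ((-1) ^ (j + n)) with (u * (-1) ^ j) by (unfold u; rewrite pow_add; ring).
      destruct (j <=? m)%nat; ring. }
  assert (HN0 : INR n <> 0) by lra.
  rewrite sum1_plus, sum1_trunc by exact Hm.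
  rewrite !sum1_scal.
  rewrite (sum1_ext _ (fun j => y * (-1) ^ j + / (2 * INR n) * ((-1) ^ j * (2 * INR j - 1))) n)
    by (intros; unfold kink; field; exact HN0).
  rewrite (sum1_ext (fun j => (-1) ^ j * (y - kink j))
             (fun j => y * (-1) ^ j + - / (2 * INR n) * ((-1) ^ j * (2 * INR j - 1))) m)
    by (intros; unfold kink; field; exact HN0).
  rewrite !sum1_plus, !sum1_scal, !sum1_alt, !sum1_alt_odd, pow_add.
  fold u; assert (Huu : u * u = 1) by apply pow_m1_sqr.
  apply Rminus_diag_uniq.
  transitivity ((u * u - 1) * (2 * INR n * y + 2 * INR n)); [field; exact HN0 | rewrite Huu; ring].
Qed.

Lemma psi_sign_on_cell n j y :
  (1 <= j <= n)%nat -> INR j - 3/4 <= INR n * y <= INR j - 1/4 ->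
  1/2 <= (-1) ^ (j + n) * psi n y.
Proof.
  intros Hj Hy.
  assert (Hjn : INR j <= INR n) by (apply le_INR; lia).
  assert (Hj1 : 1 <= INR j) by (apply (le_INR 1); lia).
  assert (Hy01 : 0 <= y <= 1) by (split; apply (Rmult_le_reg_l (INR n)); lra).
  destruct (Rle_dec (INR n * y) (INR j - 1/2)).
  - destruct j as [|j]; [lia|]; rewrite S_INR in *.
    rewrite (psi_linear_piece n j y) by (lia || lra).
    replace ((-1) ^ (S j + n)) with (- (-1) ^ (j + n)) by (simpl; ring).
    rewrite <- Rmult_assoc, Ropp_mult_distr_l_reverse, pow_m1_sqr; lra.
  - rewrite (psi_linear_piece n j y) by (lia || lra).
    rewrite <- Rmult_assoc, pow_m1_sqr; lra.
Qed.

Lemma continuous_Rplus (f g : R -> R) x :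
  continuous f x -> continuous g x -> continuous (fun t => f t + g t) x.
Proof. exact (continuous_plus f g x). Qed.

Lemma continuous_Ropp (f : R -> R) x : continuous f x -> continuous (fun t => - f t) x.
Proof. exact (continuous_opp f x). Qed.

Lemma continuous_Rminus (f g : R -> R) x :
  continuous f x -> continuous g x -> continuous (fun t => f t - g t) x.
Proof. exact (continuous_minus f g x). Qed.

Lemma continuous_Rmult (f g : R -> R) x :
  continuous f x -> continuous g x -> continuous (fun t => f t * g t) x.
Proof. exact (continuous_mult f g x). Qed.

Lemma continuous_pow_comp (f : R -> R) k x :
  continuous f x -> continuous (fun t => f t ^ k) x.
Proof.
  intros Hf; induction k as [|k IH]; simpl;
    [apply continuous_const | exact (continuous_mult f _ x Hf IH)].
Qed.

Lemma continuous_exp_comp (f : R -> R) x : continuous f x -> continuous (fun t => exp (f t)) x.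
Proof. intros Hf; apply (continuous_comp f exp); [exact Hf | apply continuous_exp]. Qed.

Lemma continuous_relu_comp (f : R -> R) x : continuous f x -> continuous (fun t => relu (f t)) x.
Proof.
  intros Hf; apply (continuous_comp f relu); [exact Hf|].
  apply (continuous_ext (fun t => (t + Rabs t) / 2)).
  - intro t; unfold relu, Rmax; destruct (Rle_dec 0 t);
      [rewrite Rabs_pos_eq | rewrite Rabs_left]; lra.
  - apply (continuous_Rmult (fun t => t + Rabs t)); [|apply continuous_const].
    apply (continuous_Rplus (fun t => t)); [apply continuous_id | apply continuous_Rabs].
Qed.

Lemma continuous_sum1 (F : nat -> R -> R) n x :
  (forall j, continuous (F j) x) -> continuous (fun t => sum1 (fun j => F j t) n) x.
Proof.
  intros HF; induction n as [|n IH]; simpl;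
    [apply continuous_const | apply continuous_Rplus; auto].
Qed.

Create HintDb continuity.
#[local] Hint Resolve continuous_const continuous_id continuous_Rplus continuous_Ropp
  continuous_Rminus continuous_Rmult continuous_pow_comp continuous_exp_comp
  continuous_relu_comp continuous_sum1 : continuity.

Lemma continuous_psi n x : continuous (psi n) x.
Proof. unfold psi; auto 8 with continuity. Qed.

Lemma continuous_peval c n x : continuous (peval c n) x.
Proof. induction n; simpl; auto with continuity. Qed.

Lemma continuous_psi_comp n (f : R -> R) x :
  continuous f x -> continuous (fun t => psi n (f t)) x.
Proof. intros Hf; apply (continuous_comp f); [exact Hf | apply continuous_psi]. Qed.

#[local] Hint Resolve continuous_psi_comp continuous_peval : continuity.

Definition deriv_coef (c : nat -> R) (k : nat) : R := INR (S k) * c (S k).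

Lemma is_derive_peval c m t : is_derive (peval c (S m)) t (peval (deriv_coef c) m t).
Proof.
  induction m as [|m IH].
  - apply is_derive_Reals; simpl; apply (derivable_pt_lim_const (0 + c O * 1)).
  - apply (is_derive_plus (peval c (S m)) (fun t => c (S m) * t ^ S m)); [exact IH|].
    apply is_derive_Reals.
    replace (deriv_coef c m * t ^ m) with (c (S m) * (INR (S m) * t ^ Nat.pred (S m)))
      by (unfold deriv_coef; simpl; ring).
    apply derivable_pt_lim_scal, derivable_pt_lim_pow.
Qed.

Lemma is_derive_0_const (f : R -> R) a b : (forall x, is_derive f x 0) -> f a = f b.
Proof.
  intros Hd.
  assert (Hmvt : forall u v, u < v -> f u = f v).
  { intros u v Huv.
    destruct (MVT_cor2 f (fun _ => 0) u v Huv) as [c [Hc _]];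
      [intros; apply is_derive_Reals, Hd | lra]. }
  destruct (Rtotal_order a b) as [|[->|]]; [auto | reflexivity | symmetry; auto].
Qed.

Lemma Rolle_zeros (f f' : R -> R) x l :
  (forall t, is_derive f t (f' t)) ->
  StronglySorted Rgt (x :: l) -> (forall y, In y (x :: l) -> f y = 0) ->
  exists l', StronglySorted Rgt l' /\ length l' = length l /\
    (forall y, In y l' -> f' y = 0 /\ y < x).
Proof.
  intros Hd; revert x; induction l as [|z l IH]; intros x Hsort Hzero.
  - exists nil; split; [constructor | split; [reflexivity | intros y []]].
  - apply StronglySorted_inv in Hsort as [Hsort Hx].
    assert (Hzx : z < x) by (inversion Hx; assumption).
    destruct (IH z Hsort) as [l' [Hs' [Hlen Hl']]]; [intros; apply Hzero; right; assumption|].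
    destruct (MVT_cor2 f f' z x Hzx) as [c [Hc Hcz]]; [intros; apply is_derive_Reals, Hd|].
    rewrite (Hzero x (or_introl eq_refl)), (Hzero z (or_intror (or_introl eq_refl))) in Hc.
    assert (Hc0 : f' c = 0) by (apply (Rmult_eq_reg_r (x - z)); lra).
    exists (c :: l'); split; [|split; [simpl; congruence|]].
    + constructor; [exact Hs'|].
      apply Forall_forall; intros y Hy; specialize (Hl' y Hy); lra.
    + intros y [<-|Hy]; [lra|]; specialize (Hl' y Hy); lra.
Qed.

Lemma peval_zeros m c l :
  StronglySorted Rgt l -> (forall y, In y l -> peval c m y = 0) -> (m <= length l)%nat ->
  forall t, peval c m t = 0.
Proof.
  revert c l; induction m as [|m IH]; intros c l Hsort Hzero Hlen t; [reflexivity|].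
  destruct l as [|x l]; [simpl in Hlen; lia|].
  destruct (Rolle_zeros _ _ x l (is_derive_peval c m) Hsort Hzero) as [l' [Hs' [Hlen' Hl']]].
  assert (Hd0 : forall y, peval (deriv_coef c) m y = 0)
    by (apply (IH _ l' Hs'); [apply Hl' | simpl in Hlen; lia]).
  rewrite (is_derive_0_const (peval c (S m)) t x); [apply Hzero; left; reflexivity|].
  intro y; rewrite <- (Hd0 y); apply is_derive_peval.
Qed.

Fixpoint count1 (P : nat -> Prop) (n : nat) : nat :=
  match n with
  | O => O
  | S k => (count1 P k + if excluded_middle_informative (P (S k)) then 1 else 0)%nat
  end.

Lemma sign_change_root (p : R -> R) x y :
  (forall t, continuous p t) -> x < y -> p x * p y < 0 -> exists z, x < z < y /\ p z = 0.
Proof.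
  intros Hp Hxy Hsign.
  destruct (IVT_gen_consistent p x y 0 Hp) as [z [Hz Hz0]].
  { unfold Rmin, Rmax; destruct Rle_dec; nra. }
  rewrite Rmin_left, Rmax_right in Hz by lra.
  exists z; split; [|exact Hz0].
  split; apply Rnot_le_lt; intro Hle;
    [replace z with x in Hz0 by lra | replace z with y in Hz0 by lra];
    rewrite Hz0 in Hsign; lra.
Qed.

Lemma unit_signs_mul_neg a b u v :
  a * a = 1 -> b * b = 1 -> a <> b -> 0 < a * u -> 0 < b * v -> u * v < 0.
Proof.
  intros Ha Hb Hab Hu Hv.
  assert (Hprod : (a - b) * (a + b) = 0) by nra.
  apply Rmult_integral in Hprod as [Hprod|Hprod]; [lra|].
  replace b with (- a) in Hv by lra.
  assert (Hpos := Rmult_lt_0_compat _ _ Hu Hv).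
  replace (a * u * (- a * v)) with (- (a * a) * (u * v)) in Hpos by ring.
  rewrite Ha in Hpos; lra.
Qed.

Section SignChanges.

Variables (p : R -> R) (lo hi sg : nat -> R).
Hypothesis p_cont : forall t, continuous p t.
Hypothesis lo_le_hi : forall j, lo j <= hi j.
Hypothesis hi_lt_lo : forall j, hi j < lo (S j).
Hypothesis sg_alt : forall j, sg (S j) = - sg j.
Hypothesis sg_sqr : forall j, sg j * sg j = 1.

Definition bad_cell (j : nat) : Prop := forall t, lo j <= t <= hi j -> sg j * p t <= 0.

Lemma hi_lt_lo_gt l j : (l < j)%nat -> hi l < lo j.
Proof.
  induction 1 as [|j _ IH]; [apply hi_lt_lo|].
  pose proof (lo_le_hi j); pose proof (hi_lt_lo j); lra.
Qed.

(* [l0] is the last good cell so far, [x] a point of it where [p] has the sign [sg l0], and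
   [l] the roots found so far.  Between two consecutive good cells there is either a sign
   change of [p], hence a new root, or (when the signs agree) an odd number of cells, hence
   at least one bad cell. *)
Lemma good_cells_prefix i :
  count1 bad_cell i = i \/
  exists l0 x l, (1 <= l0 <= i)%nat /\ lo l0 <= x <= hi l0 /\ 0 < sg l0 * p x /\
    StronglySorted Rgt l /\ List.Forall (fun y => p y = 0 /\ y < x) l /\
    (2 * i <= length l + 2 * count1 bad_cell i + l0 + 1)%nat.
Proof.
  induction i as [|i IH]; [left; reflexivity|].
  simpl count1; destruct (excluded_middle_informative (bad_cell (S i))) as [Hbad|Hgood].
  - destruct IH as [IH|(l0 & x & l & ? & ? & ? & ? & ? & ?)]; [left; lia|].
    right; exists l0, x, l; repeat split; try tauto; try lia; firstorder.
  - assert (Hx' : exists x', lo (S i) <= x' <= hi (S i) /\ 0 < sg (S i) * p x').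
    { apply NNPP; intro Hno; apply Hgood; intros t Ht.
      apply Rnot_lt_le; intro Hlt; apply Hno; exists t; auto. }
    destruct Hx' as [x' [Hx'c Hx'p]].
    rewrite Nat.add_0_r; right.
    destruct IH as [IH|(l0 & x & l & Hl0 & Hxc & Hxp & Hsort & Hl & Hcount)].
    { exists (S i), x', nil; repeat split; simpl; try lra; try lia; constructor. }
    assert (Hxx' : x < x') by (pose proof (hi_lt_lo_gt l0 (S i) ltac:(lia)); lra).
    destruct (Req_dec (sg l0) (sg (S i))) as [Hsame|Hopp].
    + assert (l0 <> i) by (intros ->; rewrite sg_alt in Hsame; pose proof (sg_sqr i); nra).
      exists (S i), x', l; repeat split; try lra; try lia; auto.
      apply (List.Forall_impl _
               (fun y Hy => conj (proj1 Hy) (Rlt_trans y x x' (proj2 Hy) Hxx')) Hl).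
    + destruct (sign_change_root p x x' p_cont Hxx') as [z [Hz Hz0]].
      { apply (unit_signs_mul_neg (sg l0) (sg (S i))); auto. }
      exists (S i), x', (z :: l); repeat split; try lra; try lia.
      * constructor; [exact Hsort|].
        apply (List.Forall_impl _ (fun y Hy => Rlt_trans y x z (proj2 Hy) (proj1 Hz)) Hl).
      * constructor; [lra|].
        apply (List.Forall_impl _
                 (fun y Hy => conj (proj1 Hy) (Rlt_trans y x x' (proj2 Hy) Hxx')) Hl).
      * simpl; lia.
Qed.

Lemma cells_le_bad_count m N :
  (forall l, StronglySorted Rgt l -> (forall y, In y l -> p y = 0) -> (m <= length l)%nat ->
     forall t, p t = 0) ->
  (N <= 2 * count1 bad_cell N + m)%nat.
Proof.
  intros Hzeros.
  destruct (good_cells_prefix N) as [Hall|(l0 & x & l & Hl0 & _ & Hxp & Hsort & Hl & Hcount)];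
    [lia|].
  assert (length l < m)%nat; [|lia].
  apply Nat.nle_gt; intro Hlen.
  rewrite Forall_forall in Hl.
  rewrite (Hzeros l Hsort (fun y Hy => proj1 (Hl y Hy)) Hlen x) in Hxp; lra.
Qed.

End SignChanges.

Lemma Rpower_gt_0 u a : 0 < Rpower u a.
Proof. apply exp_pos. Qed.

Lemma exp_le_compat x y : x <= y -> exp x <= exp y.
Proof. intros [Hlt|Heq]; [left; apply exp_increasing, Hlt | rewrite Heq; right; reflexivity]. Qed.

Lemma ln_le_sub_1 y : 0 < y -> ln y <= y - 1.
Proof. intros Hy; pose proof (exp_ineq1_le (ln y)) as H; rewrite exp_ln in H; lra. Qed.

(* [u_+ ^ a].  Unlike [Rpower u a], which is [1] at [u = 0], it is continuous at [0] when
   [a > 0]. *)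
Definition pos_pow (a u : R) : R := if Rlt_dec 0 u then Rpower u a else 0.

Lemma pos_pow_pos a u : 0 < u -> pos_pow a u = Rpower u a.
Proof. intros; unfold pos_pow; destruct Rlt_dec; [reflexivity | lra]. Qed.

Lemma pos_pow_nonpos a u : u <= 0 -> pos_pow a u = 0.
Proof. intros; unfold pos_pow; destruct Rlt_dec; [lra | reflexivity]. Qed.

Lemma pos_pow_nonneg a u : 0 <= pos_pow a u.
Proof. unfold pos_pow; destruct Rlt_dec; [apply Rlt_le, Rpower_gt_0 | lra]. Qed.

Lemma pos_pow_lt a eps u : 0 < a -> 0 < eps -> u < Rpower eps (/ a) -> pos_pow a u < eps.
Proof.
  intros Ha Heps Hu; unfold pos_pow; destruct Rlt_dec as [Hu0|]; [|lra].
  replace eps with (Rpower (Rpower eps (/ a)) a)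
    by (rewrite Rpower_mult, Rinv_l, Rpower_1; lra).
  apply Rlt_Rpower_l; lra.
Qed.

Lemma continuous_pos_pow a u : 0 < a -> continuous (pos_pow a) u.
Proof.
  intros Ha; destruct (Rtotal_order u 0) as [Hu|[->|Hu]].
  - apply (continuous_ext_loc _ (fun _ => 0)); [|apply continuous_const].
    apply (filter_imp _ _ (fun y Hy => eq_sym (pos_pow_nonpos a y (Rlt_le _ _ Hy)))
             (open_lt 0 u Hu)).
  - apply continuity_pt_filterlim; intros eps Heps.
    exists (Rpower eps (/ a)); split; [apply Rpower_gt_0|].
    intros x [_ Hx]; simpl in *; unfold R_dist in *.
    rewrite (pos_pow_nonpos a 0), Rminus_0_r, Rabs_pos_eq by (lra || apply pos_pow_nonneg).
    rewrite Rminus_0_r in Hx.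
    apply pos_pow_lt; [lra | lra | eapply Rle_lt_trans; [apply Rle_abs | exact Hx]].
  - apply (continuous_ext_loc _ (fun y => Rpower y a)).
    + apply (filter_imp _ _ (fun y Hy => eq_sym (pos_pow_pos a y Hy)) (open_gt 0 u Hu)).
    + apply continuity_pt_filterlim, derivable_continuous_pt.
      exists (a * Rpower u (a - 1)); apply derivable_pt_lim_power, Hu.
Qed.

Lemma is_derive_pos_pow s u : 1 < s -> is_derive (pos_pow s) u (s * pos_pow (s - 1) u).
Proof.
  intros Hs; destruct (Rtotal_order u 0) as [Hu|[->|Hu]].
  - rewrite pos_pow_nonpos, Rmult_0_r by lra.
    apply (is_derive_ext_loc (fun _ => 0)); [|apply (is_derive_const (K := R_AbsRing) 0)].
    apply (filter_imp _ _ (fun y Hy => eq_sym (pos_pow_nonpos s y (Rlt_le _ _ Hy)))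
             (open_lt 0 u Hu)).
  - rewrite (pos_pow_nonpos (s - 1) 0), Rmult_0_r by lra.
    apply is_derive_Reals; intros eps Heps.
    exists (mkposreal _ (Rpower_gt_0 eps (/ (s - 1)))); intros h Hh0 Hh; simpl in Hh.
    rewrite Rplus_0_l, (pos_pow_nonpos s 0), !Rminus_0_r by lra.
    unfold pos_pow at 1; destruct Rlt_dec as [Hh'|];
      [|unfold Rdiv; rewrite Rmult_0_l, Rabs_R0; lra].
    replace (Rpower h s / h) with (pos_pow (s - 1) h).
    + rewrite Rabs_pos_eq by apply pos_pow_nonneg.
      apply pos_pow_lt; [lra | lra | eapply Rle_lt_trans; [apply Rle_abs | exact Hh]].
    + rewrite pos_pow_pos by lra.
      replace s with ((s - 1) + 1) at 2 by ring.
      rewrite Rpower_plus, Rpower_1 by lra; field; lra.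
  - rewrite pos_pow_pos by lra.
    apply (is_derive_ext_loc (fun y => Rpower y s)).
    + apply (filter_imp _ _ (fun y Hy => eq_sym (pos_pow_pos s y Hy)) (open_gt 0 u Hu)).
    + apply is_derive_Reals, derivable_pt_lim_power, Hu.
Qed.

Lemma continuous_pos_pow_comp a (f : R -> R) x :
  0 < a -> continuous f x -> continuous (fun t => pos_pow a (f t)) x.
Proof. intros Ha Hf; apply (continuous_comp f); [exact Hf | apply continuous_pos_pow, Ha]. Qed.

#[local] Hint Resolve continuous_pos_pow_comp : continuity.

Lemma RInt_lin (f g : R -> R) (al be a b : R) :
  ex_RInt f a b -> ex_RInt g a b ->
  RInt (fun t => al * f t + be * g t) a b = al * RInt f a b + be * RInt g a b.
Proof.
  intros Hf Hg; apply is_RInt_unique.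
  apply (is_RInt_plus (V := R_NormedModule) (fun t => scal al (f t)) (fun t => scal be (g t)));
    apply (is_RInt_scal (V := R_NormedModule)), (RInt_correct (V := R_CompleteNormedModule));
    assumption.
Qed.

Lemma RInt_lin3 (f g h : R -> R) (al be ga a b : R) :
  ex_RInt f a b -> ex_RInt g a b -> ex_RInt h a b ->
  RInt (fun t => al * f t + be * g t + ga * h t) a b
  = al * RInt f a b + be * RInt g a b + ga * RInt h a b.
Proof.
  intros Hf Hg Hh; apply is_RInt_unique.
  apply (is_RInt_plus (V := R_NormedModule) (fun t => al * f t + be * g t)
           (fun t => scal ga (h t))).
  - apply (is_RInt_plus (V := R_NormedModule) (fun t => scal al (f t)) (fun t => scal be (g t)));
      apply (is_RInt_scal (V := R_NormedModule)), (RInt_correct (V := R_CompleteNormedModule));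
      assumption.
  - apply (is_RInt_scal (V := R_NormedModule)), (RInt_correct (V := R_CompleteNormedModule)), Hh.
Qed.

Lemma RInt_le_subinterval (H : R -> R) a a' b' b :
  a <= a' -> a' <= b' -> b' <= b -> ex_RInt H a b -> (forall t, a < t < b -> 0 <= H t) ->
  RInt H a' b' <= RInt H a b.
Proof.
  intros Ha Hab Hb Hex H0.
  assert (Ha'b : ex_RInt H a' b) by (apply (ex_RInt_Chasles_2 H a); [lra | exact Hex]).
  assert (Haa' : ex_RInt H a a') by (apply (ex_RInt_Chasles_1 H _ _ b); [lra | exact Hex]).
  assert (Ha'b' : ex_RInt H a' b') by (apply (ex_RInt_Chasles_1 H _ _ b); [lra | exact Ha'b]).
  assert (Hb'b : ex_RInt H b' b) by (apply (ex_RInt_Chasles_2 H a'); [lra | exact Ha'b]).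
  rewrite <- (RInt_Chasles H a a' b), <- (RInt_Chasles H a' b' b) by assumption.
  assert (0 <= RInt H a a') by (apply RInt_ge_0; [lra | assumption | intros; apply H0; lra]).
  assert (0 <= RInt H b' b) by (apply RInt_ge_0; [lra | assumption | intros; apply H0; lra]).
  simpl; unfold plus; simpl; lra.
Qed.

Lemma quadratic_nonneg_discr a b c :
  0 <= a -> (forall l, 0 <= a * l ^ 2 - 2 * b * l + c) -> b ^ 2 <= a * c.
Proof.
  intros Ha Hq; destruct Ha as [Ha|<-].
  - specialize (Hq (b / a)).
    replace (a * (b / a) ^ 2 - 2 * b * (b / a) + c) with ((a * c - b ^ 2) / a) in Hq
      by (field; lra).
    apply Rmult_le_compat_r with (r := a) in Hq; [|lra].
    unfold Rdiv in Hq; rewrite Rmult_assoc, Rinv_l, Rmult_0_l in Hq; lra.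
  - destruct (Req_dec b 0) as [->|Hb]; [lra|].
    specialize (Hq ((c + 1) / (2 * b))).
    replace (0 * ((c + 1) / (2 * b)) ^ 2 - 2 * b * ((c + 1) / (2 * b)) + c) with (-1) in Hq
      by (field; lra); lra.
Qed.

Lemma RInt_Cauchy_Schwarz (f g : R -> R) a b :
  a <= b -> ex_RInt (fun t => f t ^ 2) a b -> ex_RInt (fun t => g t ^ 2) a b ->
  ex_RInt (fun t => f t * g t) a b ->
  RInt (fun t => f t * g t) a b ^ 2 <= RInt (fun t => f t ^ 2) a b * RInt (fun t => g t ^ 2) a b.
Proof.
  intros Hab Hff Hgg Hfg.
  apply quadratic_nonneg_discr; [apply RInt_ge_0; auto; intros; apply pow2_ge_0|].
  intro l.
  replace (_ * l ^ 2 - _ * l + _)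
    with (l ^ 2 * RInt (fun t => f t ^ 2) a b + (- 2 * l) * RInt (fun t => f t * g t) a b
          + 1 * RInt (fun t => g t ^ 2) a b) by ring.
  rewrite <- RInt_lin3 by assumption.
  apply RInt_ge_0; [exact Hab | |].
  2:{ intros t _; replace (_ + _) with ((l * f t - g t) ^ 2) by ring; apply pow2_ge_0. }
  apply (ex_RInt_plus (V := R_NormedModule) (fun t => l ^ 2 * f t ^ 2 + - 2 * l * (f t * g t))
           (fun t => scal 1 (g t ^ 2))); [|apply (ex_RInt_scal (V := R_NormedModule)), Hgg].
  apply (ex_RInt_plus (V := R_NormedModule) (fun t => scal (l ^ 2) (f t ^ 2))
           (fun t => scal (- 2 * l) (f t * g t)));
    apply (ex_RInt_scal (V := R_NormedModule)); assumption.
Qed.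

Definition gamma_integrand (s x : R) : R := Rpower x (s - 1) * exp (- x).

Definition lower_Gamma (s b : R) : R := RInt (gamma_integrand s) 0 b.

Lemma gamma_integrand_nonneg s x : 0 <= gamma_integrand s x.
Proof. apply Rmult_le_pos; apply Rlt_le; [apply Rpower_gt_0 | apply exp_pos]. Qed.

Lemma ex_RInt_gamma_integrand s a b :
  1 < s -> 0 <= a -> 0 <= b -> ex_RInt (gamma_integrand s) a b.
Proof.
  intros Hs Ha Hb.
  apply (ex_RInt_ext (fun x => pos_pow (s - 1) x * exp (- x))).
  - intros x Hx; unfold gamma_integrand; rewrite pos_pow_pos; [reflexivity|].
    pose proof (Rmin_glb a b 0 Ha Hb); lra.
  - apply (ex_RInt_continuous (V := R_CompleteNormedModule)); intros.
    apply continuous_Rmult; auto with continuity.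
    apply (continuous_pos_pow (s - 1)); lra.
Qed.

Lemma lower_Gamma_nonneg s b : 1 < s -> 0 <= b -> 0 <= lower_Gamma s b.
Proof.
  intros; apply RInt_ge_0;
    [assumption | apply ex_RInt_gamma_integrand; lra | intros; apply gamma_integrand_nonneg].
Qed.

Lemma lower_Gamma_le s b1 b2 : 1 < s -> 0 <= b1 <= b2 -> lower_Gamma s b1 <= lower_Gamma s b2.
Proof.
  intros Hs Hb; apply RInt_le_subinterval; try lra;
    [apply ex_RInt_gamma_integrand; lra | intros; apply gamma_integrand_nonneg].
Qed.

(* From [ln (x / (2 a)) <= x / (2 a) - 1]. *)
Lemma Rpower_le_exp_half a x : 0 < a -> 0 < x -> Rpower x a <= Rpower (2 * a) a * exp (x / 2).
Proof.
  intros Ha Hx; unfold Rpower; rewrite <- exp_plus; apply exp_le_compat.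
  assert (H : ln (x / (2 * a)) <= x / (2 * a) - 1)
    by (apply ln_le_sub_1, Rdiv_lt_0_compat; lra).
  rewrite ln_div in H by lra.
  apply (Rmult_le_compat_l a) in H; [|lra].
  replace (a * (x / (2 * a) - 1)) with (x / 2 - a) in H by (field; lra); lra.
Qed.

Lemma is_RInt_exp_neg_half b : is_RInt (fun x => exp (- x / 2)) 0 b (2 - 2 * exp (- b / 2)).
Proof.
  replace (2 - 2 * exp (- b / 2)) with (minus (- 2 * exp (- b / 2)) (- 2 * exp (- 0 / 2)))
    by (unfold minus, plus, opp; simpl; rewrite Ropp_0, Rdiv_0_l, exp_0; ring).
  apply (is_RInt_derive (V := R_CompleteNormedModule) (fun x => - 2 * exp (- x / 2))).
  - intros x _; auto_derive; [exact I | unfold Rdiv; field].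
  - intros x _; unfold Rdiv; auto with continuity.
Qed.

Lemma lower_Gamma_bounded s b :
  1 < s -> 0 <= b -> lower_Gamma s b <= 2 * Rpower (2 * (s - 1)) (s - 1).
Proof.
  intros Hs Hb.
  assert (HK : 0 < Rpower (2 * (s - 1)) (s - 1)) by apply Rpower_gt_0.
  assert (Hint : is_RInt (fun x => Rpower (2 * (s - 1)) (s - 1) * exp (- x / 2)) 0 b
                   (Rpower (2 * (s - 1)) (s - 1) * (2 - 2 * exp (- b / 2))))
    by exact (is_RInt_scal _ _ _ _ _ (is_RInt_exp_neg_half b)).
  apply Rle_trans with (Rpower (2 * (s - 1)) (s - 1) * (2 - 2 * exp (- b / 2))).
  - rewrite <- (is_RInt_unique _ _ _ _ Hint).
    apply RInt_le; [exact Hb | apply ex_RInt_gamma_integrand; lra | eexists; exact Hint |].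
    intros x Hx; unfold gamma_integrand.
    replace (exp (- x / 2)) with (exp (x / 2) * exp (- x)) by (rewrite <- exp_plus; f_equal; field).
    rewrite <- Rmult_assoc; apply Rmult_le_compat_r; [apply Rlt_le, exp_pos|].
    apply Rpower_le_exp_half; lra.
  - pose proof (exp_pos (- b / 2)); nra.
Qed.

Lemma Gamma_is_lub s :
  1 < s -> is_lub (fun y => exists b, 0 <= b /\ y = lower_Gamma s b) (Gamma s).
Proof.
  intros Hs; set (E := fun y => exists b, 0 <= b /\ y = lower_Gamma s b).
  destruct (completeness E) as [l [Hub Hleast]].
  { exists (2 * Rpower (2 * (s - 1)) (s - 1)); intros y [b [Hb ->]].
    apply lower_Gamma_bounded; assumption. }
  { exists (lower_Gamma s 0), 0; split; [lra | reflexivity]. }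
  replace (Gamma s) with l; [split; assumption|].
  symmetry; unfold Gamma; apply is_RInt_gen_unique.
  intros P [eps HP].
  assert (HM : exists M, 0 <= M /\ l - eps < lower_Gamma s M).
  { apply NNPP; intro Hno.
    assert (l <= l - eps); [|pose proof (cond_pos eps); lra].
    apply Hleast; intros y [b [Hb ->]].
    apply Rnot_lt_le; intro Hlt; apply Hno; exists b; split; assumption. }
  destruct HM as [M [HM HMl]].
  apply (Filter_prod _ _ _ (fun a => a = 0) (fun b => M < b)); [reflexivity | exists M; auto|].
  intros a b -> HbM; simpl; exists (lower_Gamma s b); split.
  - apply (RInt_correct (V := R_CompleteNormedModule)), ex_RInt_gamma_integrand; lra.
  - apply HP; change (Rabs (lower_Gamma s b - l) < eps).
    assert (lower_Gamma s M <= lower_Gamma s b) by (apply lower_Gamma_le; lra).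
    assert (lower_Gamma s b <= l) by (apply Hub; exists b; split; [lra | reflexivity]).
    apply Rabs_def1; lra.
Qed.

Lemma lower_Gamma_le_Gamma s b : 1 < s -> 0 <= b -> lower_Gamma s b <= Gamma s.
Proof. intros Hs Hb; apply (Gamma_is_lub s Hs); exists b; auto. Qed.

Lemma Gamma_le_of_bound s S :
  1 < s -> (forall b, 0 <= b -> lower_Gamma s b <= S) -> Gamma s <= S.
Proof. intros Hs HS; apply (Gamma_is_lub s Hs); intros y [b [Hb ->]]; auto. Qed.

Lemma Gamma_pos s : 1 < s -> 0 < Gamma s.
Proof.
  intros Hs; apply Rlt_le_trans with (exp (-2)); [apply exp_pos|].
  apply Rle_trans with (lower_Gamma s 2); [|apply lower_Gamma_le_Gamma; lra].
  apply Rle_trans with (RInt (gamma_integrand s) 1 2);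
    [|apply RInt_le_subinterval; try lra;
      [apply ex_RInt_gamma_integrand; lra | intros; apply gamma_integrand_nonneg]].
  - replace (exp (-2)) with (RInt (fun _ => exp (-2)) 1 2)
      by (rewrite RInt_const; simpl; unfold scal; simpl; unfold mult; simpl; ring).
    apply RInt_le; [lra | apply ex_RInt_const | apply ex_RInt_gamma_integrand; lra |].
    intros x Hx; unfold gamma_integrand; rewrite <- (Rmult_1_l (exp (-2))).
    apply Rmult_le_compat; [lra | apply Rlt_le, exp_pos | | apply exp_le_compat; lra].
    rewrite <- (Rpower_O x) at 1 by lra; apply Rle_Rpower; lra.
Qed.

Lemma lower_Gamma_succ s b :
  1 < s -> 0 < b -> lower_Gamma (s + 1) b = s * lower_Gamma s b - Rpower b s * exp (- b).
Proof.
  intros Hs Hb.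
  set (F := fun u => - (pos_pow s u * exp (- u))).
  assert (HF : is_RInt (fun u => pos_pow s u * exp (- u) - s * (pos_pow (s - 1) u * exp (- u)))
                 0 b (minus (F b) (F 0))).
  { apply (is_RInt_derive (V := R_CompleteNormedModule) F).
    - intros u _; unfold F.
      apply is_derive_Reals.
      replace (pos_pow s u * exp (- u) - s * (pos_pow (s - 1) u * exp (- u)))
        with (- (s * pos_pow (s - 1) u * exp (- u) + pos_pow s u * - exp (- u))) by ring.
      apply (derivable_pt_lim_opp (fun u => pos_pow s u * exp (- u))).
      apply (derivable_pt_lim_mult (pos_pow s) (fun u => exp (- u)));
        apply is_derive_Reals; [apply is_derive_pos_pow, Hs | auto_derive; [exact I | ring]].
    - intros u _; assert (0 < s - 1) by lra; assert (0 < s) by lra; auto 6 with continuity. }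
  apply (is_RInt_unique (V := R_CompleteNormedModule)) in HF.
  unfold F, minus, plus, opp in HF; simpl in HF.
  rewrite (pos_pow_pos s b), (pos_pow_nonpos s 0) in HF by lra.
  rewrite (RInt_ext _ (fun u => 1 * gamma_integrand (s + 1) u + (- s) * gamma_integrand s u))
    in HF.
  - rewrite RInt_lin in HF by (apply ex_RInt_gamma_integrand; lra).
    unfold lower_Gamma; lra.
  - intros u Hu; rewrite Rmin_left, Rmax_right in Hu by lra.
    unfold gamma_integrand; rewrite !pos_pow_pos by lra.
    replace (s + 1 - 1) with s by ring; simpl; ring.
Qed.

Lemma Rpower_mul_exp_neg_small s eps :
  0 < s -> 0 < eps -> exists B, 0 < B /\ forall b, B <= b -> Rpower b s * exp (- b) <= eps.
Proof.
  intros Hs Heps; set (K := Rpower (2 * s) s).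
  assert (HK : 0 < K) by apply Rpower_gt_0.
  exists (Rmax 1 (2 * ln (K / eps))); split; [pose proof (Rmax_l 1 (2 * ln (K / eps))); lra|].
  intros b Hb.
  pose proof (Rmax_l 1 (2 * ln (K / eps))); pose proof (Rmax_r 1 (2 * ln (K / eps))).
  apply Rle_trans with (K * exp (b / 2) * exp (- b)).
  { apply Rmult_le_compat_r; [apply Rlt_le, exp_pos | apply Rpower_le_exp_half; lra]. }
  rewrite Rmult_assoc, <- exp_plus.
  replace (b / 2 + - b) with (- (b / 2)) by field.
  apply (Rmult_le_reg_r (exp (b / 2))); [apply exp_pos|].
  rewrite Rmult_assoc, <- exp_plus, Rplus_opp_l, exp_0, Rmult_1_r.
  replace K with (eps * exp (ln (K / eps)))
    by (rewrite exp_ln by (apply Rdiv_lt_0_compat; lra); field; lra).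
  apply Rmult_le_compat_l; [lra | apply exp_le_compat; lra].
Qed.

Lemma Gamma_succ_ge s : 1 < s -> s * Gamma s <= Gamma (s + 1).
Proof.
  intros Hs; apply Rle_plus_epsilon; intros eps Heps.
  destruct (Rpower_mul_exp_neg_small s eps) as [B [HB HBeps]]; [lra | exact Heps|].
  rewrite Rmult_comm; apply Rle_div_r; [lra|].
  apply Gamma_le_of_bound; [exact Hs|]; intros b Hb.
  set (b' := Rmax b B).
  assert (b <= b' /\ B <= b') as [Hbb' HBb'] by (split; [apply Rmax_l | apply Rmax_r]).
  apply Rle_trans with (lower_Gamma s b'); [apply lower_Gamma_le; lra|].
  apply Rle_div_r; [lra|].
  pose proof (lower_Gamma_succ s b' Hs ltac:(lra)).
  pose proof (lower_Gamma_le_Gamma (s + 1) b' ltac:(lra) ltac:(lra)).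
  pose proof (HBeps b' HBb'); lra.
Qed.

Definition half_gamma_integrand (s t : R) : R := Rpower t ((s - 1) / 2) * exp (- t / 2).

Lemma half_gamma_integrand_mul s s' t :
  half_gamma_integrand s t * half_gamma_integrand s' t = gamma_integrand ((s + s') / 2) t.
Proof.
  unfold half_gamma_integrand, gamma_integrand.
  replace (Rpower t ((s - 1) / 2) * exp (- t / 2) * (Rpower t ((s' - 1) / 2) * exp (- t / 2)))
    with (Rpower t ((s - 1) / 2) * Rpower t ((s' - 1) / 2) * (exp (- t / 2) * exp (- t / 2)))
    by ring.
  rewrite <- Rpower_plus, <- exp_plus; f_equal; f_equal; field.
Qed.

Lemma lower_Gamma_log_convex x b :
  3/2 < x -> 0 <= b ->
  lower_Gamma x b ^ 2 <= lower_Gamma (x - 1/2) b * lower_Gamma (x + 1/2) b.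
Proof.
  intros Hx Hb.
  assert (Hsq : forall s t, half_gamma_integrand s t ^ 2 = gamma_integrand s t)
    by (intros; rewrite <- Rsqr_pow2; unfold Rsqr;
        rewrite half_gamma_integrand_mul; f_equal; field).
  assert (Hmid : forall t, half_gamma_integrand (x - 1/2) t * half_gamma_integrand (x + 1/2) t
                           = gamma_integrand x t)
    by (intros; rewrite half_gamma_integrand_mul; f_equal; field).
  unfold lower_Gamma.
  replace (RInt (gamma_integrand x) 0 b)
    with (RInt (fun t => half_gamma_integrand (x - 1/2) t * half_gamma_integrand (x + 1/2) t) 0 b)
    by (apply RInt_ext; auto).
  replace (RInt (gamma_integrand (x - 1/2)) 0 b)
    with (RInt (fun t => half_gamma_integrand (x - 1/2) t ^ 2) 0 b) by (apply RInt_ext; auto).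
  replace (RInt (gamma_integrand (x + 1/2)) 0 b)
    with (RInt (fun t => half_gamma_integrand (x + 1/2) t ^ 2) 0 b) by (apply RInt_ext; auto).
  apply RInt_Cauchy_Schwarz; [exact Hb | ..];
    [apply (ex_RInt_ext (gamma_integrand (x - 1/2)))
    | apply (ex_RInt_ext (gamma_integrand (x + 1/2)))
    | apply (ex_RInt_ext (gamma_integrand x))];
    try (intros; symmetry; auto); apply ex_RInt_gamma_integrand; lra.
Qed.

Lemma Gamma_half_shift_ge x : 3/2 < x -> sqrt (x - 1/2) * Gamma x <= Gamma (x + 1/2).
Proof.
  intros Hx.
  assert (Hc : 0 < sqrt (x - 1/2)) by (apply sqrt_lt_R0; lra).
  assert (Hcc : sqrt (x - 1/2) * sqrt (x - 1/2) = x - 1/2) by (apply sqrt_sqrt; lra).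
  assert (Hsucc := Gamma_succ_ge (x - 1/2) ltac:(lra)).
  replace (x - 1/2 + 1) with (x + 1/2) in Hsucc by lra.
  assert (HGm := Gamma_pos (x - 1/2) ltac:(lra)).
  assert (HGp := Gamma_pos (x + 1/2) ltac:(lra)).
  rewrite Rmult_comm; apply Rle_div_r; [exact Hc|].
  apply Gamma_le_of_bound; [lra|]; intros b Hb.
  apply Rle_div_r; [exact Hc|].
  assert (HF := lower_Gamma_log_convex x b Hx Hb).
  assert (Hm := lower_Gamma_le_Gamma (x - 1/2) b ltac:(lra) Hb).
  assert (Hp := lower_Gamma_le_Gamma (x + 1/2) b ltac:(lra) Hb).
  assert (H0m := lower_Gamma_nonneg (x - 1/2) b ltac:(lra) Hb).
  assert (H0p := lower_Gamma_nonneg (x + 1/2) b ltac:(lra) Hb).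
  assert (Hsq : (lower_Gamma x b * sqrt (x - 1/2)) ^ 2 <= Gamma (x + 1/2) ^ 2).
  { replace ((lower_Gamma x b * sqrt (x - 1/2)) ^ 2)
      with (sqrt (x - 1/2) * sqrt (x - 1/2) * lower_Gamma x b ^ 2) by ring.
    rewrite Hcc.
    apply Rle_trans with ((x - 1/2) * (Gamma (x - 1/2) * Gamma (x + 1/2))).
    - apply Rmult_le_compat_l; [lra|].
      apply Rle_trans with (1 := HF), Rmult_le_compat; assumption.
    - rewrite <- Rmult_assoc; simpl; rewrite Rmult_1_r.
      apply Rmult_le_compat_r; lra. }
  nra.
Qed.

Lemma mu_density_const_ge D :
  4 < D -> sqrt D / (2 * sqrt PI) <= Gamma (D / 2) / (sqrt PI * Gamma ((D - 1) / 2)).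
Proof.
  intros HD.
  assert (HPI : 0 < sqrt PI) by (apply sqrt_lt_R0, PI_RGT_0).
  assert (HG := Gamma_pos ((D - 1) / 2) ltac:(lra)).
  assert (Hshift := Gamma_half_shift_ge ((D - 1) / 2) ltac:(lra)).
  replace ((D - 1) / 2 + 1 / 2) with (D / 2) in Hshift by field.
  assert (Hsqrt : sqrt D / 2 <= sqrt ((D - 1) / 2 - 1 / 2)).
  { rewrite <- (sqrt_pow2 (sqrt D / 2)) by (apply Rdiv_le_0_compat; [apply sqrt_pos | lra]).
    apply sqrt_le_1_alt.
    replace ((sqrt D / 2) ^ 2) with (sqrt D * sqrt D / 4) by field.
    rewrite sqrt_sqrt; lra. }
  replace (sqrt D / (2 * sqrt PI)) with (sqrt D / 2 / sqrt PI) by (field; lra).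
  replace (Gamma (D / 2) / (sqrt PI * Gamma ((D - 1) / 2)))
    with (Gamma (D / 2) / Gamma ((D - 1) / 2) / sqrt PI) by (field; lra).
  apply Rmult_le_compat_r; [apply Rlt_le, Rinv_0_lt_compat, HPI|].
  apply (Rle_div_r (sqrt D / 2) _ _ HG).
  apply Rle_trans with (2 := Hshift), Rmult_le_compat_r; lra.
Qed.

Lemma pos_pow_one_sub_sq_ge D t :
  3 <= D -> t ^ 2 <= 1 / D -> exp (-1) <= pos_pow ((D - 3) / 2) (1 - t ^ 2).
Proof.
  intros HD Ht.
  assert (HD1 : 1 / D < 1) by (apply (Rmult_lt_reg_l D); [lra | field_simplify; lra]).
  assert (HD0 : 0 < 1 / D) by (apply Rdiv_lt_0_compat; lra).
  rewrite pos_pow_pos by lra.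
  apply Rle_trans with (Rpower (1 - 1 / D) ((D - 3) / 2));
    [|apply Rle_Rpower_l; [apply Rdiv_le_0_compat | split]; lra].
  unfold Rpower; apply exp_le_compat.
  assert (Hln : ln (/ (1 - 1 / D)) <= / (1 - 1 / D) - 1)
    by (apply ln_le_sub_1, Rinv_0_lt_compat; lra).
  rewrite ln_Rinv in Hln by lra.
  replace (/ (1 - 1 / D) - 1) with (1 / (D - 1)) in Hln by (field; lra).
  apply Rle_trans with ((D - 3) / 2 * - (1 / (D - 1))).
  - replace ((D - 3) / 2 * - (1 / (D - 1))) with (- ((D - 3) / (2 * (D - 1)))) by (field; lra).
    enough ((D - 3) / (2 * (D - 1)) <= 1) by lra.
    apply (Rmult_le_reg_l (2 * (D - 1))); [lra | field_simplify; lra].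
  - apply Rmult_le_compat_l; [apply Rdiv_le_0_compat|]; lra.
Qed.

Lemma sawtooth_gap_on_bad_cell n j y q :
  (1 <= j <= n)%nat -> INR j - 3/4 <= INR n * y <= INR j - 1/4 -> (-1) ^ (j + n) * q <= 0 ->
  1/4 <= (psi n y - q) ^ 2.
Proof.
  intros Hj Hy Hq.
  assert (Hpsi := psi_sign_on_cell n j y Hj Hy).
  assert (Hgap : 1/2 <= (-1) ^ (j + n) * (psi n y - q)) by lra.
  replace ((psi n y - q) ^ 2) with (((-1) ^ (j + n) * (psi n y - q)) ^ 2)
    by (rewrite Rpow_mult_distr, <- Rsqr_pow2 with (x := (-1) ^ (j + n)); unfold Rsqr;
        rewrite pow_m1_sqr; ring).
  nra.
Qed.

Lemma RInt_ge_count (H : R -> R) (P : nat -> Prop) a h m n :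
  0 < h -> (forall u v, ex_RInt H u v) -> (forall t, 0 <= H t) ->
  (forall j t, (1 <= j <= n)%nat -> P j ->
     a + (INR j - 3/4) * h <= t <= a + (INR j - 1/4) * h -> m <= H t) ->
  INR (count1 P n) * (h / 2 * m) <= RInt H a (a + INR n * h).
Proof.
  intros Hh Hex H0; induction n as [|n IH]; intros Hm.
  - simpl; rewrite Rmult_0_l, Rmult_0_l, Rplus_0_r, RInt_point; right; reflexivity.
  - cbn [count1]; rewrite plus_INR, Rmult_plus_distr_r, S_INR.
    rewrite <- (RInt_Chasles H a (a + INR n * h)) by auto.
    apply Rplus_le_compat; [apply IH; intros j t Hj; apply Hm; lia|].
    destruct (excluded_middle_informative (P (S n))) as [HP|]; simpl INR.
    + apply Rle_trans with (RInt H (a + (INR n + 1/4) * h) (a + (INR n + 3/4) * h)).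
      * replace (1 * (h / 2 * m))
          with (RInt (fun _ => m) (a + (INR n + 1/4) * h) (a + (INR n + 3/4) * h))
          by (rewrite RInt_const; simpl; unfold scal; simpl; unfold mult; simpl; field).
        apply RInt_le; [nra | apply ex_RInt_const | auto |].
        intros t Ht; apply (Hm (S n)); [lia | exact HP | rewrite S_INR; lra].
      * apply RInt_le_subinterval; auto; try nra; intros; auto.
    + rewrite Rmult_0_l; apply RInt_ge_0; auto; nra.
Qed.

Lemma sqr_inv_5_e_PI_le : (1 / (5 * exp 1 * PI)) ^ 2 <= 1 / (96 * sqrt PI * exp 1).
Proof.
  assert (He : 2 <= exp 1) by (pose proof (exp_ineq1_le 1); lra).
  assert (HPI : 3 < PI) by (pose proof PI2_3_2; lra).
  assert (Hr : sqrt PI * sqrt PI = PI) by (apply sqrt_sqrt; lra).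
  assert (Hr0 : 0 < sqrt PI) by (apply sqrt_lt_R0; lra).
  assert (HrP : sqrt PI <= PI) by nra.
  replace ((1 / (5 * exp 1 * PI)) ^ 2) with (1 / (25 * exp 1 * PI * PI * exp 1)) by (field; lra).
  unfold Rdiv; rewrite !Rmult_1_l; apply Rinv_le_contravar; [nra|].
  apply Rmult_le_compat_r; [lra|].
  assert (150 <= 25 * exp 1 * PI) by nra.
  nra.
Qed.

Section SawtoothL2Bound.

Variables (d : nat) (c : nat -> R).
Hypothesis d_ge_5 : (5 <= d)%nat.

Let s := sqrt (INR d).
Let n := (3 * d)%nat.
Let p := peval c (2 * d).
Let K := Gamma (INR d / 2) / (sqrt PI * Gamma ((INR d - 1) / 2)).
Let al := (INR d - 3) / 2.
Let integrand t := (psi n (s * t) - p t) ^ 2 * (K * pos_pow al (1 - t ^ 2)).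
Let h := / (INR n * s).
Let lo j := (INR j - 3/4) * h.
Let hi j := (INR j - 1/4) * h.
Let sg j := (-1) ^ (j + n).

Let INR_d_ge_5 : 5 <= INR d.
Proof. replace 5 with (INR 5) by (simpl; lra); apply le_INR, d_ge_5. Qed.

Let s_sqr : s * s = INR d.
Proof. pose proof INR_d_ge_5; apply sqrt_sqrt; lra. Qed.

Let s_ge_1 : 1 <= s.
Proof. pose proof INR_d_ge_5; rewrite <- sqrt_1; apply sqrt_le_1_alt; lra. Qed.

Let INR_n : INR n = 3 * INR d.
Proof. unfold n; rewrite mult_INR; simpl; ring. Qed.

Let h_pos : 0 < h.
Proof. pose proof s_ge_1; pose proof INR_d_ge_5; apply Rinv_0_lt_compat; nra. Qed.

Let K_ge : s / (2 * sqrt PI) <= K.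
Proof. pose proof INR_d_ge_5; apply mu_density_const_ge; lra. Qed.

Let sqrt_PI_pos : 0 < sqrt PI.
Proof. apply sqrt_lt_R0, PI_RGT_0. Qed.

Let K_pos : 0 < K.
Proof.
  pose proof s_ge_1; pose proof sqrt_PI_pos.
  eapply Rlt_le_trans, K_ge; apply Rdiv_lt_0_compat; lra.
Qed.

Let ex_RInt_integrand u v : ex_RInt integrand u v.
Proof.
  apply (ex_RInt_continuous (V := R_CompleteNormedModule)); intros t _.
  assert (Hal : 0 < al) by (pose proof INR_d_ge_5; unfold al; lra).
  unfold integrand, p; auto 8 with continuity.
Qed.

Let integrand_nonneg t : 0 <= integrand t.
Proof.
  apply Rmult_le_pos;
    [apply pow2_ge_0 | apply Rmult_le_pos; [apply Rlt_le, K_pos | apply pos_pow_nonneg]].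
Qed.

Lemma sawtooth_L2norm_eq : L2norm d (fun t => psi n (s * t) - p t) = sqrt (RInt integrand (-1) 1).
Proof.
  unfold L2norm; f_equal; apply RInt_ext; intros t Ht.
  rewrite Rmin_left, Rmax_right in Ht by lra.
  unfold integrand, mu_density; rewrite pos_pow_pos by nra; reflexivity.
Qed.

Lemma sawtooth_bad_cells_count_ge : (d <= 2 * count1 (bad_cell p lo hi sg) n)%nat.
Proof.
  enough (n <= 2 * count1 (bad_cell p lo hi sg) n + 2 * d)%nat by (unfold n in *; lia).
  pose proof h_pos; apply cells_le_bad_count.
  - intro; unfold p; auto with continuity.
  - intro j; unfold lo, hi; nra.
  - intro j; unfold lo, hi; rewrite S_INR; nra.
  - intro j; unfold sg; simpl; ring.
  - intro j; apply pow_m1_sqr.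
  - apply peval_zeros.
Qed.

Lemma sawtooth_integrand_ge_on_bad_cell j t :
  (1 <= j <= n)%nat -> bad_cell p lo hi sg j -> lo j <= t <= hi j ->
  K * exp (-1) / 4 <= integrand t.
Proof.
  intros Hj Hbad Ht; unfold lo, hi in Ht.
  pose proof h_pos; pose proof s_ge_1; pose proof K_pos; pose proof INR_d_ge_5.
  assert (HjN : INR j <= INR n) by (apply le_INR; lia).
  assert (Hj1 : 1 <= INR j) by (apply (le_INR 1); lia).
  assert (Hts : INR n * (s * t) = t / h) by (unfold h; field; nra).
  assert (Hgap : 1/4 <= (psi n (s * t) - p t) ^ 2).
  { apply (sawtooth_gap_on_bad_cell n j); [lia | | apply Hbad; exact Ht].
    rewrite Hts; split; [apply Rle_div_r | apply Rle_div_l]; lra. }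
  assert (Hst : 0 <= s * t <= 1).
  { assert (Ht0 : 0 < t)
      by (apply Rlt_le_trans with ((INR j - 3/4) * h); [apply Rmult_lt_0_compat |]; lra).
    split; [apply Rmult_le_pos; lra|].
    apply Rle_trans with (INR n * (s * t) / INR n); [right; field; lra|].
    rewrite Hts; apply Rle_div_l; [lra|]; apply Rle_div_l; [exact h_pos|]; nra. }
  assert (Hdens : exp (-1) <= pos_pow al (1 - t ^ 2)).
  { apply pos_pow_one_sub_sq_ge; [lra|].
    replace (1 / INR d) with (/ (s * s)) by (rewrite s_sqr; field; lra).
    apply (Rmult_le_reg_l (s * s)); [nra|]; rewrite Rinv_r by nra.
    replace (s * s * t ^ 2) with ((s * t) * (s * t)) by ring; nra. }
  pose proof (exp_pos (-1)); unfold integrand.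
  apply Rle_trans with (1/4 * (K * exp (-1))); [lra|].
  apply Rmult_le_compat; [lra | nra | exact Hgap | apply Rmult_le_compat_l; lra].
Qed.

(* There are at least [d / 2] bad cells, each containing an interval of length
   [h / 2 = 1 / (6 d s)] on which the integrand is at least [K / (4 e) >= s / (8 e sqrt PI)]. *)
Lemma sawtooth_RInt_ge : 1 / (96 * sqrt PI * exp 1) <= RInt integrand (-1) 1.
Proof.
  pose proof h_pos; pose proof s_ge_1; pose proof K_ge; pose proof sqrt_PI_pos.
  pose proof INR_d_ge_5.
  set (nbad := count1 (bad_cell p lo hi sg) n).
  assert (Hcells : INR nbad * (h / 2 * (K * exp (-1) / 4)) <= RInt integrand 0 (0 + INR n * h)).
  { apply RInt_ge_count; [exact h_pos | exact ex_RInt_integrand | exact integrand_nonneg |].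
    intros j t Hj Hbad Ht; rewrite !Rplus_0_l in Ht.
    apply (sawtooth_integrand_ge_on_bad_cell j); assumption. }
  assert (Hsub : RInt integrand 0 (0 + INR n * h) <= RInt integrand (-1) 1).
  { assert (Hnh : INR n * h = / s) by (unfold h; field; nra).
    rewrite Rplus_0_l, Hnh.
    apply RInt_le_subinterval; [lra | | | apply ex_RInt_integrand | intros; apply integrand_nonneg].
    - apply Rlt_le, Rinv_0_lt_compat; lra.
    - rewrite <- Rinv_1; apply Rinv_le_contravar; lra. }
  assert (Hnbad : INR d <= 2 * INR nbad).
  { replace 2 with (INR 2) by reflexivity; rewrite <- mult_INR.
    apply le_INR, sawtooth_bad_cells_count_ge. }
  apply Rle_trans with (2 := Hsub), Rle_trans with (2 := Hcells).
  pose proof (exp_pos 1); pose proof (exp_pos (-1)).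
  apply Rle_trans with (INR d / 2 * (h / 2 * (s / (2 * sqrt PI) * exp (-1) / 4))).
  - right; unfold h; rewrite INR_n.
    replace (exp (-1)) with (/ exp 1) by (rewrite <- exp_Ropp; f_equal; ring).
    field; repeat split; lra.
  - apply Rmult_le_compat; try lra.
    + apply Rmult_le_pos; [lra|]; apply Rmult_le_pos; [|lra].
      apply Rmult_le_pos; [apply Rdiv_le_0_compat|]; lra.
    + apply Rmult_le_compat_l; [lra|]; apply Rmult_le_compat_r; [lra|].
      apply Rmult_le_compat_r; lra.
Qed.

Lemma L2norm_sawtooth_ge : 1 / (5 * exp 1 * PI) <= L2norm d (fun t => psi n (s * t) - p t).
Proof.
  pose proof (exp_pos 1); pose proof PI_RGT_0.
  rewrite sawtooth_L2norm_eq, <- (sqrt_pow2 (1 / (5 * exp 1 * PI)))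
    by (apply Rlt_le, Rdiv_lt_0_compat; nra).
  apply sqrt_le_1_alt, Rle_trans with (2 := sawtooth_RInt_ge), sqr_inv_5_e_PI_le.
Qed.

End SawtoothL2Bound.

Theorem lemma9 :
  exists d0 : nat, forall d : nat, (d0 <= d)%nat ->
    Rbar_le (Finite (1 / (5 * exp 1 * PI)))
            (A d (2 * d) (fun t => psi (3 * d) (sqrt (INR d) * t))).
Proof.
  exists 5%nat; intros d Hd; unfold A.
  apply (Glb_Rbar_correct _); intros r [c ->].
  apply L2norm_sawtooth_ge, Hd.
Qed.
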